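(* Let $D$ be a strongly connected tournament and let $S$ be a minimum feedback arc set of $D$ such that the subdigraph $D_S$ arc-induced by $S$ is a directed path. Let $m=|S|$ and $k\ge 2$. Then $D$ is $k$-AW if and only if $\gcd(k,F_{m+2})=1$.
   Context: A tournament is a digraph in which for every pair of distinct vertices $v,w$ exactly one of $vw$, $wv$ is an arc. Strongly connected: for any two vertices there are directed walks in both directions. For an ordering $\sigma=v_1,\dots,v_n$ of $V(D)$, the feedback arc set with respect to $\sigma$ is the set of arcs $v_jv_i\in A(D)$ with $i<j$; a feedback arc set is one with respect to some ordering; a minimum feedback arc set is one of minimum cardinality over all orderings. For $B\subseteq A(D)$, the arc-induced subdigraph $D_B$ has arc set $B$ and vertex set the vertices incident with arcs of $B$. A directed path is a digraph whose vertices can be ordered $u_1,\dots,u_p$ so that its arc set is exactly $\{u_iu_{i+1}:1\le i\le p-1\}$. Fibonacci numbers: $F_0=0,F_1=1,F_j=F_{j-1}+F_{j-2}$. The $k$-lights out game: start with a labeling $V(D)\to\mathbb{Z}_k$; toggling $v$ increases by $1$ mod $k$ the label of $v$ and of every $w$ with $vw\in A(D)$; the game is won when all labels are $0$. $D$ is $k$-AW if every labeling $V(D)\to\mathbb{Z}_k$ can be brought to the all-zero labeling by toggling. *)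

From mathcomp Require Import all_boot all_algebra.
Set Implicit Arguments. Unset Strict Implicit. Unset Printing Implicit Defensive.
Import GRing.Theory.

Definition tournament (V : finType) (a : rel V) : Prop :=
  (forall v, ~~ a v v) /\
  (forall v w, v != w -> (a v w && ~~ a w v) || (a w v && ~~ a v w)).

Definition strongly_connected (V : finType) (a : rel V) : Prop :=
  forall v w, connect a v w.

Definition ordering (V : finType) (s : seq V) : Prop := perm_eq s (enum V).

Definition fas_wrt (V : finType) (a : rel V) (s : seq V) : {set V * V} :=
  [set e | a e.1 e.2 && (index e.2 s < index e.1 s)].

Definition feedback_arc_set (V : finType) (a : rel V) (S : {set V * V}) : Prop :=
  exists s, ordering s /\ S = fas_wrt a s.

Definition min_feedback_arc_set (V : finType) (a : rel V) (S : {set V * V}) : Prop :=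
  feedback_arc_set a S /\
  forall s, ordering s -> #|S| <= #|fas_wrt a s|.

Definition arc_induced_vertices (V : finType) (B : {set V * V}) : {set V} :=
  [set x | [exists e in B, (e.1 == x) || (e.2 == x)]].

Definition arc_induced_is_dipath (V : finType) (B : {set V * V}) : Prop :=
  exists p : seq V,
    [/\ uniq p,
        arc_induced_vertices B = [set x in p] &
        forall e : V * V,
          e \in B <-> exists2 i, i.+1 < size p &
                        e = (nth e.1 p i, nth e.1 p i.+1)].

Fixpoint fib (n : nat) : nat :=
  match n with
  | 0 => 0
  | 1 => 1
  | (m.+1 as n').+1 => fib n' + fib m
  end.

(* k-lights out game. *)
Definition toggle (V : finType) (a : rel V) (k : nat)
    (l : V -> 'Z_k) (v : V) : V -> 'Z_k :=
  fun w => (if (w == v) || a v w then l w + 1 else l w)%R.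

Definition toggles (V : finType) (a : rel V) (k : nat)
    (l : V -> 'Z_k) (s : seq V) : V -> 'Z_k :=
  foldl (toggle a (k:=k)) l s.

Definition k_AW (V : finType) (a : rel V) (k : nat) : Prop :=
  forall l : V -> 'Z_k, exists s : seq V, forall w, toggles a l s w = 0%R.

(* D is k-AW iff the pressing map x |-> (w |-> sum of x v over v = w and over
   the arcs v w), an endomorphism of ('Z_k)^V, is onto; by finiteness this
   means that its kernel is trivial.  Fix an ordering s whose backward arcs S
   form the path p_0 -> ... -> p_(n-1).  Against s, pressing is "prefix sums
   of x, corrected by the backward arcs" (press_prefix_sum).  Minimality of S
   forces every backward arc to jump over some vertex (min_fas_gap), so the
   predecessor in s of a path vertex is off the path (prev_off_dipath).  Hence
   a kernel element restricted to the path, y_t = x p_t, satisfies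
   y_t = y_(t+1) - y_(t-1) with zero boundary values; the solutions of this
   recurrence are y_t = F_(t+1) y_0 with F_(n+1) y_0 = 0, and every solution
   extends to a kernel element (kernel_extend).  So the kernel is trivial iff
   multiplication by F_(n+1) is injective on 'Z_k, i.e. iff k and F_(n+1) are
   coprime, where n = |S| + 1. *)

From mathcomp Require Import all_boot all_algebra.
From mathcomp Require Import zify.
Set Implicit Arguments. Unset Strict Implicit. Unset Printing Implicit Defensive.
Import GRing.Theory.

Local Open Scope ring_scope.

Lemma surjF_inj (T : finType) (f : T -> T) :
  (forall y, exists x, f x == y) -> injective f.
Proof.
move=> fS; pose g y := xchoose (fS y).
have gK : cancel g f by move=> y; apply/eqP; exact: (xchooseP (fS y)).
have [h gh hg] := injF_bij (can_inj gK).
by move=> x1 x2; rewrite -[x1]hg -[x2]hg !gK => ->.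
Qed.

Section LightsOut.
Variables (V : finType) (a : rel V).

(* press x w is the total change of the label of w when every vertex v is
   toggled x v times: w gains x v for v = w and for every arc v w. *)
Definition press (R : nmodType) (x : V -> R) (w : V) : R :=
  \sum_v (if (w == v) || a v w then x v else 0).

Definition in_kernel (R : nmodType) (x : V -> R) : Prop := forall w, press x w = 0.

Lemma eq_press (R : nmodType) (x y : V -> R) : x =1 y -> press x =1 press y.
Proof. by move=> xy w; apply: eq_bigr => v _; rewrite xy. Qed.

Lemma pressB (R : zmodType) (x y : V -> R) w :
  press (fun v => x v - y v) w = press x w - press y w.
Proof. by rewrite /press -sumrB; apply: eq_bigr => v _; case: ifP; rewrite ?subr0. Qed.

Lemma toggles_press (k : nat) (l : V -> 'Z_k) (s : seq V) w :
  toggles a l s w = l w + press (fun v => (count_mem v s)%:R) w.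
Proof.
elim: s l => [|u s IH] l.
  by rewrite /press big1 ?addr0 // => v _; case: ifP.
rewrite /toggles /= -/(toggles _ _ _) IH /toggle /press.
rewrite [in RHS](eq_bigr (fun v => (if (w == v) || a v w then (u == v)%:R else 0) +
                          (if (w == v) || a v w then (count_mem v s)%:R else 0))); last first.
  by move=> v _; case: ifP; rewrite ?addr0 //= natrD.
rewrite big_split /= addrA; congr (_ + _); rewrite (bigD1 u) //= eqxx big1 ?addr0.
  by case: ifP; rewrite ?addr0.
by move=> v; rewrite eq_sym => /negPf ->; case: ifP.
Qed.

Definition toggle_seq (k : nat) (x : V -> 'Z_k) : seq V :=
  flatten [seq nseq (x u : nat) u | u <- enum V].

Lemma toggles_realise (k : nat) (x : V -> 'Z_k) l w :
  toggles a l (toggle_seq x) w = l w + press x w.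
Proof.
rewrite toggles_press; congr (_ + _); apply: eq_press => v.
rewrite count_flatten -map_comp sumnE big_map big_enum /= (bigD1 v) //=.
rewrite count_nseq /= eqxx mul1n big1 ?addn0 ?natr_Zp // => u /negPf uv.
by rewrite /= count_nseq /= uv.
Qed.

Lemma kAW_press_onto (k : nat) :
  k_AW a k <-> forall y : V -> 'Z_k, exists x, forall w, press x w = y w.
Proof.
split=> [kAW y | onto l].
  have [s win] := kAW (fun w => - y w).
  exists (fun v => (count_mem v s)%:R) => w.
  by apply/eqP; rewrite -subr_eq0 addrC -(win w) toggles_press.
have [x xl] := onto (fun w => - l w).
by exists (toggle_seq x) => w; rewrite toggles_realise xl subrr.
Qed.

Lemma press_onto_kernel (k : nat) :
  (forall y : V -> 'Z_k, exists x, forall w, press x w = y w) <->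
  (forall x : V -> 'Z_k, in_kernel x -> forall w, x w = 0).
Proof.
pose pressF (x : {ffun V -> 'Z_k}) : {ffun V -> 'Z_k} := [ffun w => press x w].
have pressFB x y : pressF x - pressF y = pressF (x - y).
  by apply/ffunP => w; rewrite !ffunE -pressB; apply: eq_press => v; rewrite !ffunE.
have pressF_inj_ker : injective pressF <-> forall x, pressF x = 0 -> x = 0.
  split=> [inj x x0 | ker x y xy]; last first.
    by apply/eqP; rewrite -subr_eq0; apply/eqP/ker; rewrite -pressFB xy subrr.
  apply: inj; rewrite x0; apply/ffunP => w; rewrite !ffunE.
  by apply/esym/big1 => v _; rewrite ffunE; case: ifP.
have ffun_ker x : in_kernel x -> pressF [ffun v => x v] = 0.
  by move=> x0; apply/ffunP => w; rewrite !ffunE -(x0 w); apply: eq_press => v; rewrite ffunE.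
split=> [onto | ker].
  have /surjF_inj/pressF_inj_ker pressF_ker : forall y, exists x, pressF x == y.
    move=> y; have [x xy] := onto y; exists [ffun v => x v].
    by apply/eqP/ffunP => w; rewrite ffunE -xy; apply: eq_press => v; rewrite ffunE.
  by move=> x /ffun_ker/pressF_ker/ffunP x0 w; have := x0 w; rewrite !ffunE.
have [|g gK Kg] := @injF_bij _ pressF.
  apply/pressF_inj_ker => x /ffunP x0; apply/ffunP => w; rewrite ffunE; apply: ker => u.
  by have := x0 u; rewrite !ffunE.
move=> y; exists (g [ffun w => y w]) => w.
by have := congr1 (fun f : {ffun V -> 'Z_k} => f w) (Kg [ffun w => y w]); rewrite !ffunE.
Qed.

End LightsOut.

(* Multiplication by F is injective on 'Z_k exactly when F is coprime to k:
   otherwise k %/ gcd k F is a nonzero element killed by F. *)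
Lemma natr_regular_Zp (k F : nat) : (1 < k)%N ->
  (forall c : 'Z_k, F%:R * c = 0 -> c = 0) <-> coprime k F.
Proof.
move=> k_gt1; split=> [F_reg | kF c]; last first.
  by rewrite -(unitZpE F k_gt1) in kF; move=> Fc; rewrite -[c](mulKr kF) Fc mulr0.
set g := gcdn k F; have g_gt0 : (0 < g)%N by rewrite gcdn_gt0; lia.
have gk : (g %| k)%N := dvdn_gcdl k F.
have /F_reg/(congr1 val) : F%:R * (k %/ g)%:R = 0 :> 'Z_k.
  rewrite -natrM muln_divA // -divn_mulAC ?dvdn_gcdr // natrM.
  by rewrite pchar_Zp // mulr0.
rewrite /= val_Zp_nat // => /eqP k_dvd.
have kg_gt0 : (0 < k %/ g)%N by rewrite divn_gt0 // dvdn_leq //; lia.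
have := dvdn_leq kg_gt0 k_dvd; rewrite leq_divRL // => /(leq_trans _).
by rewrite /coprime eqn_leq g_gt0 andbT -(leq_pmul2l (ltnW k_gt1)) muln1; apply.
Qed.

Definition out_sum (V : finType) (S : {set V * V}) (R : nmodType) (x : V -> R) (w : V) : R :=
  \sum_v (if (w, v) \in S then x v else 0).
Definition in_sum (V : finType) (S : {set V * V}) (R : nmodType) (x : V -> R) (w : V) : R :=
  \sum_v (if (v, w) \in S then x v else 0).

Section Ordering.
Variables (V : finType) (s : seq V).
Hypothesis s_ord : ordering s.

Lemma ordering_mem z : z \in s.
Proof. by rewrite (perm_mem s_ord) mem_enum. Qed.

Lemma ordering_uniq : uniq s.
Proof. by rewrite (perm_uniq s_ord) enum_uniq. Qed.

Lemma ordering_index_inj : injective (index^~ s).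
Proof. by move=> v w e; rewrite -(nth_index v (ordering_mem v)) e nth_index ?ordering_mem. Qed.

Definition prefix_sum (R : nmodType) (x : V -> R) (w : V) : R :=
  \sum_v (if (index v s <= index w s)%N then x v else 0).

(* prev_vtx w is the vertex immediately preceding w (meaningful if index w s > 0). *)
Definition prev_vtx (w : V) : V := nth w s (index w s).-1.

Lemma index_prev_vtx w : (0 < index w s)%N -> index (prev_vtx w) s = (index w s).-1.
Proof.
move=> w_gt0; rewrite index_uniq ?ordering_uniq //.
by have := index_mem w s; rewrite ordering_mem; lia.
Qed.

Lemma prefix_sumS (R : nmodType) (x : V -> R) w :
  prefix_sum x w = x w + (if (0 < index w s)%N then prefix_sum x (prev_vtx w) else 0).
Proof.
rewrite /prefix_sum (bigD1 w) //= leqnn; congr (_ + _).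
case: ifP => [w_gt0 | /negbT]; last first.
  rewrite -eqn0Ngt => /eqP w0; apply: big1 => v vw.
  have : index v s != index w s by rewrite (inj_eq ordering_index_inj).
  by case: ifP => //; lia.
rewrite [RHS](bigD1 w) //= (index_prev_vtx w_gt0) ifF ?add0r; last by lia.
apply: eq_bigr => v vw.
have : index v s != index w s by rewrite (inj_eq ordering_index_inj).
by case: ifP; case: ifP => //; lia.
Qed.

Lemma prefix_sum_diff (R : zmodType) (z : V -> R) w :
  prefix_sum (fun v => z v - (if (0 < index v s)%N then z (prev_vtx v) else 0)) w = z w.
Proof.
move: {2}(index w s) (erefl (index w s)) => n; elim: n w => [|n IH] w wn.
  by rewrite prefix_sumS wn /= subr0 addr0.
by rewrite prefix_sumS wn /= IH ?subrK // index_prev_vtx wn.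
Qed.

Variable a : rel V.
Hypothesis a_tour : tournament a.

(* Pressing, seen through the ordering s: forward arcs and the vertex itself
   give the prefix sum, corrected by the backward arcs. *)
Lemma press_prefix_sum (R : zmodType) (x : V -> R) w :
  press a x w = prefix_sum x w - out_sum (fas_wrt a s) x w + in_sum (fas_wrt a s) x w.
Proof.
case: a_tour => a_irr a_tot.
rewrite /press /prefix_sum /out_sum /in_sum -sumrB -big_split /=; apply: eq_bigr => v _.
rewrite !inE /=; have [->|wv] := eqVneq w v.
  by rewrite (negPf (a_irr v)) leqnn /= subr0 addr0.
have : index v s != index w s by rewrite (inj_eq ordering_index_inj) eq_sym.
have := a_tot v w; rewrite eq_sym wv => /(_ isT).
by case: (a v w); case: (a w v) => //= _; case: ltngtP => //= _ _;
   rewrite ?subrr ?subr0 ?addr0 ?add0r.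
Qed.

End Ordering.

Local Close Scope ring_scope.

Definition swap_pos (i n : nat) : nat :=
  if n == i then i.+1 else if n == i.+1 then i else n.

Lemma swap_pos_lt i m n :
  swap_pos i m < swap_pos i n -> (m < n) || (m == i.+1) && (n == i).
Proof. by rewrite /swap_pos; do 2?[case: eqP]; do 2?[case: eqP]; lia. Qed.

Definition swap_vtx (T : eqType) (v w z : T) : T :=
  if z == v then w else if z == w then v else z.

Lemma swap_vtxK (T : eqType) (v w : T) : involutive (swap_vtx v w).
Proof.
move=> z; rewrite /swap_vtx.
have [->|zv] := eqVneq z v; first by rewrite eqxx; case: eqVneq.
have [->|zw] := eqVneq z w; first by rewrite eqxx.
by rewrite (negPf zv) (negPf zw).
Qed.

(* In a minimum feedback arc set of a tournament no backward arc joins two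
   consecutive vertices: otherwise exchanging them removes that arc and
   creates no new backward arc. *)
Lemma min_fas_gap (V : finType) (a : rel V) (s : seq V) (S : {set V * V}) v w :
  tournament a -> ordering s -> S = fas_wrt a s ->
  (forall s', ordering s' -> #|S| <= #|fas_wrt a s'|) ->
  (v, w) \in S -> (index w s).+1 < index v s.
Proof.
move=> [a_irr a_tot] s_ord S_fas S_min vwS.
have := vwS; rewrite S_fas inE /= => /andP [avw wv].
rewrite ltn_neqAle wv andbT; apply/negP => /eqP vw_adj.
have v_neq_w : v != w by apply: contraNneq (a_irr v) => e; rewrite {2}e.
have nawv : ~~ a w v by have := a_tot v w v_neq_w; rewrite avw /= andbF orbF.
pose s' := map (swap_vtx v w) s.
have s'_ord : ordering s'.
  apply: uniq_perm; rewrite ?enum_uniq ?map_inj_uniq ?ordering_uniq //.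
    exact: can_inj (swap_vtxK v w).
  by move=> z; rewrite mem_enum -(swap_vtxK v w z) map_f ?ordering_mem.
have index_s' z : index z s' = swap_pos (index w s) (index z s).
  rewrite -{1}(swap_vtxK v w z) index_map; last exact: can_inj (swap_vtxK v w).
  rewrite /swap_vtx /swap_pos vw_adj !(inj_eq (ordering_index_inj s_ord)).
  by have [->|_] := eqVneq z v; [rewrite (negPf v_neq_w) | case: eqP].
have fas_s' : fas_wrt a s' \subset S :\ (v, w).
  apply/subsetP => [[x y]]; rewrite !inE S_fas inE /= !index_s' => /andP [axy yx'].
  case/orP: (swap_pos_lt yx') => [yx | /andP [/eqP yv /eqP xw]]; last first.
    by move: axy; rewrite vw_adj in yv; rewrite (ordering_index_inj s_ord yv)
         (ordering_index_inj s_ord xw) (negPf nawv).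
  rewrite axy yx !andbT; apply: contraTneq yx' => -[-> ->].
  by rewrite /swap_pos -vw_adj !eqxx (gtn_eqF (ltnSn _)) ltnNge leqnSn.
have := leq_trans (S_min s' s'_ord) (subset_leq_card fas_s').
by rewrite [in X in X <= _](cardsD1 (v, w) S) vwS add1n ltnn.
Qed.

Definition dipath_arcs (V : finType) (S : {set V * V}) (p : seq V) : Prop :=
  forall e : V * V,
    e \in S <-> exists2 i, i.+1 < size p & e = (nth e.1 p i, nth e.1 p i.+1).

Section Dipath.
Variables (V : finType) (S : {set V * V}) (p : seq V).
Hypotheses (S_path : dipath_arcs S p) (p_uniq : uniq p).

Lemma dipath_arc d t : t.+1 < size p -> (nth d p t, nth d p t.+1) \in S.
Proof.
move=> t_lt; apply/S_path; exists t => //=.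
by congr pair; apply: set_nth_default => //; exact: ltnW.
Qed.

Lemma dipath_arcP d u v :
  (u, v) \in S -> exists2 i, i.+1 < size p & u = nth d p i /\ v = nth d p i.+1.
Proof.
move=> /S_path [i i_lt [-> ->]]; exists i => //.
by split; apply: set_nth_default => //; exact: ltnW.
Qed.

Lemma dipath_arc_mem u v : (u, v) \in S -> u \in p /\ v \in p.
Proof.
by move=> /(dipath_arcP u) [i i_lt [-> ->]]; rewrite !mem_nth // ltnW.
Qed.

Lemma out_sum_off (R : nmodType) (x : V -> R) w : w \notin p -> out_sum S x w = 0%R.
Proof.
by move=> wp; apply: big1 => v _; case: ifP => // /dipath_arc_mem [wp' _]; rewrite wp' in wp.
Qed.

Lemma in_sum_off (R : nmodType) (x : V -> R) w : w \notin p -> in_sum S x w = 0%R.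
Proof.
by move=> wp; apply: big1 => v _; case: ifP => // /dipath_arc_mem [_ wp']; rewrite wp' in wp.
Qed.

Lemma eq_out_sum_dipath (R : nmodType) (x1 x2 : V -> R) :
  {in p, x1 =1 x2} -> out_sum S x1 =1 out_sum S x2.
Proof. by move=> x12 w; apply: eq_bigr => v _; case: ifP => // /dipath_arc_mem [_ /x12]. Qed.

Lemma eq_in_sum_dipath (R : nmodType) (x1 x2 : V -> R) :
  {in p, x1 =1 x2} -> in_sum S x1 =1 in_sum S x2.
Proof. by move=> x12 w; apply: eq_bigr => v _; case: ifP => // /dipath_arc_mem [/x12]. Qed.

Lemma out_sum_dipath (R : nmodType) (x : V -> R) d t : t < size p ->
  out_sum S x (nth d p t) = if t.+1 < size p then x (nth d p t.+1) else 0%R.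
Proof.
move=> t_lt; rewrite /out_sum.
have arc_end v : (nth d p t, v) \in S -> t.+1 < size p /\ v = nth d p t.+1.
  case/(dipath_arcP d) => i i_lt [/eqP + ->].
  by rewrite nth_uniq ?(ltnW i_lt) // => /eqP ->.
case: ifP => [t_end | t_end].
  rewrite (bigD1 (nth d p t.+1)) //= dipath_arc // big1 ?addr0 // => v v_neq.
  by case: ifP => // /arc_end [_ v_eq]; rewrite v_eq eqxx in v_neq.
by apply: big1 => v _; case: ifP => // /arc_end [t_end']; rewrite t_end' in t_end.
Qed.

Lemma in_sum_dipath (R : nmodType) (x : V -> R) d t : t < size p ->
  in_sum S x (nth d p t) = if 0 < t then x (nth d p t.-1) else 0%R.
Proof.
move=> t_lt; rewrite /in_sum.
have arc_start v : (v, nth d p t) \in S -> 0 < t /\ v = nth d p t.-1.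
  case/(dipath_arcP d) => i i_lt [-> /eqP].
  by rewrite nth_uniq // => /eqP ->.
case: ifP => [t_gt0 | t_gt0].
  have := dipath_arc d (_ : t.-1.+1 < size p); rewrite prednK // => arc.
  rewrite (bigD1 (nth d p t.-1)) //= arc // big1 ?addr0 // => v v_neq.
  by case: ifP => // /arc_start [_ v_eq]; rewrite v_eq eqxx in v_neq.
by apply: big1 => v _; case: ifP => // /arc_start [t_gt0']; rewrite t_gt0' in t_gt0.
Qed.

Lemma card_dipath : #|S| = (size p).-1.
Proof.
case p_eq: p => [|d p']; last rewrite -p_eq.
  suff -> : S = set0 by rewrite cards0.
  by apply/setP => e; rewrite inE; apply/idP => /S_path []; rewrite p_eq.
have succ_lt i : (i.+1 < size p) = (i < (size p).-1) by rewrite p_eq.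
have -> : S = [set (nth d p i, nth d p i.+1) | i : 'I_(size p).-1].
  apply/setP => -[u v]; apply/idP/imsetP => [|[i _ ->]]; last first.
    by apply: dipath_arc; rewrite succ_lt.
  case/(dipath_arcP d) => i; rewrite succ_lt => i_lt [-> ->].
  by exists (Ordinal i_lt).
have ord_lt (i : 'I_(size p).-1) : i < size p by rewrite ltnW ?succ_lt.
by rewrite card_imset ?card_ord // => i j [/eqP]; rewrite nth_uniq // => /eqP/val_inj.
Qed.

End Dipath.

Section PathInOrdering.
Variables (V : finType) (S : {set V * V}) (p s : seq V).
Hypotheses (S_path : dipath_arcs S p) (p_uniq : uniq p) (s_ord : ordering s).
Hypothesis S_gap : forall u v, (u, v) \in S -> (index v s).+1 < index u s.

Lemma dipath_index_drop d r dd : r + dd < size p ->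
  index (nth d p (r + dd)) s + 2 * dd <= index (nth d p r) s.
Proof.
elim: dd => [|dd IH] lt_size; first by rewrite addn0 muln0 addn0.
have := IH (ltnW (leq_trans _ lt_size)).
have := S_gap (dipath_arc S_path d (_ : (r + dd).+1 < _)).
by rewrite addnS; lia.
Qed.

Lemma prev_off_dipath d t : t < size p ->
  0 < index (nth d p t) s -> prev_vtx s (nth d p t) \notin p.
Proof.
move=> t_lt w_gt0; apply/negP => prev_p; have r_eq := nth_index d prev_p.
set r := index _ p in r_eq.
have r_lt : r < size p by rewrite index_mem.
have idx_r : index (nth d p r) s = (index (nth d p t) s).-1.
  by rewrite r_eq index_prev_vtx.
clearbody r; case: (ltngtP r t) => [rt | tr | r_eq_t].
- by have := @dipath_index_drop d r (t - r); rewrite (subnKC (ltnW rt)) => /(_ t_lt); lia.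
- by have := @dipath_index_drop d t (r - t); rewrite (subnKC (ltnW tr)) => /(_ r_lt); lia.
- by have := ltn_predL (index (nth d p t) s); rewrite -idx_r r_eq_t ltnn w_gt0.
Qed.

End PathInOrdering.

Local Open Scope ring_scope.

Arguments fib : simpl never.

Lemma fibSS n : fib n.+2 = (fib n.+1 + fib n)%N.
Proof. by []. Qed.

Section PathRecurrence.
Variables (R : pzRingType) (n : nat).

Definition path_diff (y : nat -> R) (t : nat) : R :=
  (if (t.+1 < n)%N then y t.+1 else 0) - (if (0 < t)%N then y t.-1 else 0).

Lemma eq_path_diff y1 y2 : (forall t, (t < n)%N -> y1 t = y2 t) ->
  forall t, (t < n)%N -> path_diff y1 t = path_diff y2 t.
Proof.
move=> y12 t t_lt; rewrite /path_diff.
by case: ifP => [t1_lt | _]; case: ifP => [t_gt0 | _]; rewrite ?y12 //; lia.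
Qed.

Definition solves_path_eq (y : nat -> R) : Prop :=
  forall t, (t < n)%N -> y t = path_diff y t.

Lemma path_eq_fib y : solves_path_eq y -> forall t, (t < n)%N -> y t = (fib t.+1)%:R * y 0.
Proof.
move=> y_sol; suff fib_pair : forall t, ((t < n)%N -> y t = (fib t.+1)%:R * y 0) /\
    ((t.+1 < n)%N -> y t.+1 = (fib t.+2)%:R * y 0) by move=> t; case: (fib_pair t).
elim=> [|t [IH1 IH]].
  split=> [|lt_n]; first by rewrite mul1r.
  by have := y_sol 0%N (ltnW lt_n); rewrite /path_diff lt_n subr0 mul1r.
split=> [//|lt_n]; have lt_n' := ltn_trans (ltnSn _) lt_n.
have := y_sol t.+1 (ltnW lt_n); rewrite /path_diff lt_n /= => /eqP.
rewrite eq_sym subr_eq => /eqP ->.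
by rewrite IH // IH1 ?(ltnW lt_n') // (fibSS t.+1) natrD mulrDl.
Qed.

Lemma path_eq_end y : solves_path_eq y -> (0 < n)%N -> (fib n.+1)%:R * y 0 = 0.
Proof.
move=> y_sol n_gt0; have n1_lt : (n.-1 < n)%N by rewrite ltn_predL.
have last_eq := y_sol _ n1_lt.
rewrite /path_diff prednK // ltnn sub0r in last_eq.
case: ifP last_eq => [n_gt1 | /negbT]; last first.
  by rewrite -eqn0Ngt => /eqP ->; rewrite oppr0 => ->; rewrite mulr0.
move=> /eqP; rewrite -addr_eq0 (path_eq_fib y_sol n1_lt).
rewrite (path_eq_fib y_sol (_ : n.-2 < n)%N); last by lia.
have [m n_eq] : exists m, n = m.+2 by exists n.-2; lia.
by rewrite -mulrDl -natrD n_eq /= -fibSS => /eqP.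
Qed.

Lemma fib_solves_path_eq c :
  (fib n.+1)%:R * c = 0 -> solves_path_eq (fun t => (fib t.+1)%:R * c).
Proof.
move=> Fc t t_lt; rewrite /path_diff; case: ifP => [t_end | /negbT t_end].
  case: t t_lt t_end => [|t] _ t_end; first by rewrite subr0.
  by rewrite /= (fibSS t.+1) natrD mulrDl addrK.
have n_eq : n = t.+1 by lia.
rewrite sub0r; move: Fc; rewrite n_eq fibSS natrD mulrDl => /eqP.
rewrite addr_eq0 => /eqP ->.
by case: t {t_lt t_end} n_eq => [|t] _ /=; rewrite ?mul0r ?oppr0.
Qed.

End PathRecurrence.

Section Kernel.
Variables (V : finType) (a : rel V) (s : seq V) (S : {set V * V}) (p : seq V).
Variable R : pzRingType.
Hypotheses (a_tour : tournament a) (s_ord : ordering s) (S_fas : S = fas_wrt a s).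
Hypotheses (S_path : dipath_arcs S p) (p_uniq : uniq p).
Hypothesis S_gap : forall u v, (u, v) \in S -> ((index v s).+1 < index u s)%N.

Lemma out_in_dipath (x : V -> R) d t : (t < size p)%N ->
  out_sum S x (nth d p t) - in_sum S x (nth d p t) =
  path_diff (size p) (fun i => x (nth d p i)) t.
Proof. by move=> t_lt; rewrite out_sum_dipath // in_sum_dipath. Qed.

Lemma kernel_prefix_sum (x : V -> R) w : in_kernel a x ->
  prefix_sum s x w = out_sum S x w - in_sum S x w.
Proof.
move=> /(_ w); rewrite (press_prefix_sum s_ord a_tour) -S_fas => /eqP.
by rewrite addr_eq0 subr_eq addrC => /eqP.
Qed.

(* On the path, a kernel element solves the path recurrence: its value at p_t
   is the prefix sum at p_t minus the prefix sum at the predecessor, which is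
   off the path and so carries no backward-arc correction. *)
Lemma kernel_solves_path_eq (x : V -> R) d : in_kernel a x ->
  solves_path_eq (size p) (fun t => x (nth d p t)).
Proof.
move=> x_ker t t_lt; have := prefix_sumS s_ord x (nth d p t).
rewrite !kernel_prefix_sum // out_in_dipath //.
case: ifP => [w_gt0 | _]; last by rewrite addr0.
have off := prev_off_dipath S_path p_uniq s_ord S_gap t_lt w_gt0.
by rewrite (out_sum_off S_path) // (in_sum_off S_path) // subr0 addr0.
Qed.

Lemma kernel_vanish (x : V -> R) :
  in_kernel a x -> {in p, forall v, x v = 0} -> forall w, x w = 0.
Proof.
move=> x_ker x_p; have prefix0 w : prefix_sum s x w = 0.
  rewrite kernel_prefix_sum // (eq_out_sum_dipath S_path (x2 := fun=> 0)) //.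
  rewrite (eq_in_sum_dipath S_path (x2 := fun=> 0)) // /out_sum /in_sum.
  by rewrite !big1 ?subr0 // => v; case: ifP.
by move=> w; have := prefix_sumS s_ord x w; rewrite !prefix0; case: ifP => _; rewrite addr0.
Qed.

Lemma kernel_extend d (y : nat -> R) : solves_path_eq (size p) y ->
  exists x, in_kernel a x /\ forall t, (t < size p)%N -> x (nth d p t) = y t.
Proof.
move=> y_sol; pose yv v := if v \in p then y (index v p) else 0.
have yv_p t : (t < size p)%N -> yv (nth d p t) = y t.
  by move=> t_lt; rewrite /yv mem_nth // index_uniq.
pose Q v := out_sum S yv v - in_sum S yv v.
pose x v := Q v - (if (0 < index v s)%N then Q (prev_vtx s v) else 0).
have x_p t : (t < size p)%N -> x (nth d p t) = y t.
  move=> t_lt; rewrite /x; case: ifP => [w_gt0 | _]; last first.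
    by rewrite subr0 /Q out_in_dipath // (eq_path_diff yv_p) // -y_sol.
  have off := prev_off_dipath S_path p_uniq s_ord S_gap t_lt w_gt0.
  rewrite /Q (out_sum_off S_path _ off) (in_sum_off S_path _ off) !subr0.
  by rewrite out_in_dipath // (eq_path_diff yv_p) // -y_sol.
exists x; split=> // w.
have x_yv : {in p, x =1 yv} by move=> v v_p; rewrite -(nth_index d v_p) x_p ?yv_p ?index_mem.
rewrite (press_prefix_sum s_ord a_tour) -S_fas.
rewrite (eq_out_sum_dipath S_path x_yv) (eq_in_sum_dipath S_path x_yv).
by rewrite /x prefix_sum_diff // /Q addrAC subrK subrr.
Qed.

Lemma kernel_trivial_iff :
  (forall x : V -> R, in_kernel a x -> forall w, x w = 0) <->
  (forall c : R, (fib (size p).+1)%:R * c = 0 -> c = 0).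
Proof.
split=> [ker_triv | F_reg x x_ker].
  case p_eq: p => [|d p'] c; first by rewrite mul1r.
  rewrite -p_eq => /fib_solves_path_eq/(kernel_extend d) [x [x_ker x_p]].
  by rewrite -[c]mul1r -(x_p 0%N) ?ker_triv // p_eq.
apply: kernel_vanish => // v v_p; have y_sol := kernel_solves_path_eq v x_ker.
have p_gt0 : (0 < size p)%N by case: (p) v_p.
have y0 := F_reg _ (path_eq_end y_sol p_gt0).
by rewrite -{1}(nth_index v v_p) (path_eq_fib y_sol) ?index_mem // y0 mulr0.
Qed.

End Kernel.

Local Close Scope ring_scope.

Theorem mainTheorem7 (V : finType) (a : rel V) (S : {set V * V}) (k : nat) :
  tournament a -> strongly_connected a ->
  min_feedback_arc_set a S -> arc_induced_is_dipath S ->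
  2 <= k ->
  (k_AW a k <-> coprime k (fib (#|S| + 2))).
Proof.
move=> a_tour _ [[s [s_ord S_fas]] S_min] [p [p_uniq _ S_path]] k_gt1.
have S_gap := min_fas_gap a_tour s_ord S_fas S_min.
have -> : fib (#|S| + 2) = fib (size p).+1.
  by rewrite (card_dipath S_path p_uniq) addn2; case: (size p).
rewrite -natr_regular_Zp // -(kernel_trivial_iff _ a_tour s_ord S_fas S_path p_uniq S_gap).
exact: iff_trans (kAW_press_onto a k) (press_onto_kernel a k).
Qed.
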